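(* Let $L = L_p + \varepsilon L_d \in \mathbb{DH}[t]$ with $L_p, L_d$ vectorial and satisfying the Plücker condition $L_p\overline{L_d} + L_d\overline{L_p} = 0$, let $h \in \mathbb{R}[t]$, and let $P, D \in \mathbb{H}[t]$ with $P \neq 0$ satisfy $$P\mathbf{k}\overline{P} = hL_p, \qquad -P\mathbf{k}\overline{D} - D\mathbf{k}\overline{P} = hL_d .$$ Then $P\overline{D} + D\overline{P} = 0$.
   Context: $\mathbb{H}$ denotes the real quaternions with units $\mathbf{i},\mathbf{j},\mathbf{k}$ and conjugation $\overline{p_0 + p_1\mathbf{i} + p_2\mathbf{j} + p_3\mathbf{k}} = p_0 - p_1\mathbf{i} - p_2\mathbf{j} - p_3\mathbf{k}$; $\mathbb{DH} = \mathbb{H} + \varepsilon\mathbb{H}$ with $\varepsilon^2=0$, $\varepsilon$ central. $\mathbb{H}[t]$, $\mathbb{DH}[t]$ are polynomial rings in a real indeterminate $t$ commuting with the coefficients; conjugation acts coefficientwise. A quaternion polynomial is vectorial if its scalar part is zero. *)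

(* H[t] is modelled as quat {poly R}: a polynomial with quaternion coefficients
   is the same as a quaternion whose four components are real polynomials
   (t commutes with everything), and coefficientwise conjugation is
   componentwise negation of the vector part. *)
From HB Require Import structures.
From mathcomp Require Import all_boot all_order all_algebra.
From mathcomp Require Import reals.
Set Implicit Arguments. Unset Strict Implicit. Unset Printing Implicit Defensive.
Import GRing.Theory.
Local Open Scope ring_scope.

Record quat (A : Type) := Quat { q0 : A; q1 : A; q2 : A; q3 : A }.

Section QuatOps.
Variable A : comRingType.

Definition qadd (p q : quat A) : quat A :=
  Quat (q0 p + q0 q) (q1 p + q1 q) (q2 p + q2 q) (q3 p + q3 q).

Definition qopp (p : quat A) : quat A :=
  Quat (- q0 p) (- q1 p) (- q2 p) (- q3 p).

Definition qmul (p q : quat A) : quat A :=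
  Quat (q0 p * q0 q - q1 p * q1 q - q2 p * q2 q - q3 p * q3 q)
       (q0 p * q1 q + q1 p * q0 q + q2 p * q3 q - q3 p * q2 q)
       (q0 p * q2 q - q1 p * q3 q + q2 p * q0 q + q3 p * q1 q)
       (q0 p * q3 q + q1 p * q2 q - q2 p * q1 q + q3 p * q0 q).

Definition qconj (p : quat A) : quat A :=
  Quat (q0 p) (- q1 p) (- q2 p) (- q3 p).

Definition qzero : quat A := Quat 0 0 0 0.

Definition qscal (a : A) : quat A := Quat a 0 0 0.

Definition qk : quat A := Quat 0 0 0 1.

Definition vectorial (p : quat A) : Prop := q0 p = 0.
End QuatOps.

(* Dual quaternions: primal + eps * dual *)
Record dquat (A : Type) := DQuat { dprimal : quat A; ddual : quat A }.

Definition quatpoly (R : realType) := quat {poly R}.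
Definition dquatpoly (R : realType) := dquat {poly R}.

(* Write <p, q> for the Euclidean inner product on H, so that
   p q̄ + q p̄ = 2 <p, q> for all quaternions p, q.  The Plücker condition
   thus says <L_p, L_d> = 0, whence <P k P̄, -(P k D̄ + D k P̄)> =
   h^2 <L_p, L_d> = 0.  Left and right multiplication by u scale <., .> by
   |u|^2, so the left-hand side equals -2 |P|^2 <P, D>; as |P|^2 is a nonzero
   sum of squares in the domain R[t], <P, D> = 0, i.e. P D̄ + D P̄ = 0. *)
From mathcomp Require Import all_boot all_order all_algebra reals ring.
Set Implicit Arguments. Unset Strict Implicit. Unset Printing Implicit Defensive.
Import GRing.Theory Num.Theory.
Local Open Scope ring_scope.

Section QuatInner.
Variable A : comRingType.
Implicit Types a d p q u v w x y : quat A.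

Definition qinner p q := q0 p * q0 q + q1 p * q1 q + q2 p * q2 q + q3 p * q3 q.

Definition qnorm p := qinner p p.

Lemma qadd_mul_conj p q :
  qadd (qmul p (qconj q)) (qmul q (qconj p)) = qscal (2%:R * qinner p q).
Proof. by rewrite /qadd /qmul /qconj /qscal /qinner /=; congr Quat; ring. Qed.

Lemma qoppD v w : qadd (qopp v) (qopp w) = qopp (qadd v w).
Proof. by rewrite /qadd /qopp /=; congr Quat; ring. Qed.

Lemma qinnerDr u v w : qinner u (qadd v w) = qinner u v + qinner u w.
Proof. by rewrite /qinner /=; ring. Qed.

Lemma qinnerNr u v : qinner u (qopp v) = - qinner u v.
Proof. by rewrite /qinner /=; ring. Qed.

Lemma qinner_conj x y : qinner (qconj x) (qconj y) = qinner x y.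
Proof. by rewrite /qinner /=; ring. Qed.

Lemma qinner_mull u x y : qinner (qmul u x) (qmul u y) = qnorm u * qinner x y.
Proof. by rewrite /qnorm /qinner /=; ring. Qed.

Lemma qinner_mulr u x y : qinner (qmul x u) (qmul y u) = qnorm u * qinner x y.
Proof. by rewrite /qnorm /qinner /=; ring. Qed.

Lemma qnormM p q : qnorm (qmul p q) = qnorm p * qnorm q.
Proof. exact: qinner_mull. Qed.

Lemma qnorm_k : qnorm (qk A) = 1.
Proof. by rewrite /qnorm /qinner /=; ring. Qed.

Lemma qinner_sandwich p d a :
  qinner (qmul (qmul p a) (qconj p))
         (qadd (qmul (qmul p a) (qconj d)) (qmul (qmul d a) (qconj p)))
  = 2%:R * (qnorm p * qnorm a * qinner p d).
Proof.
rewrite qinnerDr qinner_mull qinner_mulr qinner_conj qinner_mulr qnormM.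
by rewrite /qnorm qinner_conj; ring.
Qed.

End QuatInner.

Section RealPolyQuat.
Variable R : realDomainType.
Implicit Types p q : {poly R}.

Lemma poly_horner_eq0 p : (forall x, p.[x] = 0) -> p = 0.
Proof.
move=> p0; apply: (@roots_geq_poly_eq0 _ p [seq i%:R | i <- iota 0 (size p)]).
- by apply/allP => _ /mapP [i _ ->]; rewrite /root p0.
- by rewrite map_inj_uniq ?iota_uniq // => i j /eqP; rewrite eqr_nat => /eqP.
- by rewrite size_map size_iota.
Qed.

Lemma mul2r_poly_eq0 p : 2%:R * p = 0 -> p = 0.
Proof.
by move/eqP; rewrite mulf_eq0 -polyC_natr polyC_eq0 pnatr_eq0 => /eqP.
Qed.

Lemma qnorm_poly_eq0 (P : quat {poly R}) : qnorm P = 0 -> P = qzero _.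
Proof.
case: P => p0 p1 p2 p3; rewrite /qnorm /qinner /= => norm0.
suff eval0 x : [/\ p0.[x] = 0, p1.[x] = 0, p2.[x] = 0 & p3.[x] = 0].
  by congr Quat; apply: poly_horner_eq0 => x; case: (eval0 x).
move/(congr1 (horner^~ x)): norm0; rewrite !hornerE -!expr2 => /eqP.
rewrite !paddr_eq0 ?addr_ge0 ?sqr_ge0 // !sqrf_eq0.
by case/andP => /andP[/andP[/eqP-> /eqP->] /eqP->] /eqP->.
Qed.

End RealPolyQuat.

Theorem lemma2 (R : realType) (L : dquatpoly R) (h : {poly R}) (P D : quatpoly R) :
  vectorial (dprimal L) -> vectorial (ddual L) ->
  qadd (qmul (dprimal L) (qconj (ddual L)))
       (qmul (ddual L) (qconj (dprimal L))) = qzero _ ->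
  P <> qzero _ ->
  qmul (qmul P (qk _)) (qconj P) = qmul (qscal h) (dprimal L) ->
  qadd (qopp (qmul (qmul P (qk _)) (qconj D)))
       (qopp (qmul (qmul D (qk _)) (qconj P))) = qmul (qscal h) (ddual L) ->
  qadd (qmul P (qconj D)) (qmul D (qconj P)) = qzero _.
Proof.
move=> _ _ pluecker P_neq0 primal dual.
have LpLd0 : qinner (dprimal L) (ddual L) = 0.
  by move/(congr1 (@q0 _)): pluecker; rewrite qadd_mul_conj => /mul2r_poly_eq0.
have normP_neq0 : qnorm P != 0 by apply/eqP => /qnorm_poly_eq0.
have : qinner (qmul (qscal h) (dprimal L)) (qmul (qscal h) (ddual L)) = 0.
  by rewrite qinner_mull LpLd0 mulr0.
rewrite -primal -dual qoppD qinnerNr qinner_sandwich qnorm_k mulr1.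
move/eqP; rewrite oppr_eq0 => /eqP /mul2r_poly_eq0 /eqP.
rewrite mulf_eq0 (negbTE normP_neq0) /= => /eqP PD0.
by rewrite qadd_mul_conj PD0 mulr0.
Qed.
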